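(* Fix $\delta\in(0,1)$ and $\gamma'>0$. For all sufficiently large $n$ the following holds. Let $G=(X\cup Y,E)$ be a $d$-regular bipartite graph on $2n$ vertices with $d=\lfloor\delta n\rfloor$, let $t\le\log^4 n$, let $A\in\mathcal G(w,t)$, and let $(S,T)$ be a $\gamma'$-container for $A$. Then $|S|\le |T|$.
   Context: $N(S)$ is the neighbourhood of $S$; $d_S(v)$ is the number of neighbours of $v$ in $S$. A polymer is a subset of $X$ connected in the square $G^2$ of $G$. The closure of $A\subseteq X$ is $[A]:=\{x\in X: N(x)\subseteq N(A)\}$. $\mathcal G(w,t):=\{A\subseteq X \text{ polymer} : |N(A)|=w,\ |N(A)|-|[A]|=t\}$. For $A\subseteq X$ write $W=N(A)$ and $W_s=\{y\in W: d_A(y)\ge s\}$. A pair $(S,T)\in 2^X\times 2^Y$ is a $\gamma'$-container for $A$ (with $t=|N(A)|-|[A]|$) if (i) $S\supseteq[A]$ and $W_{d/2}\subseteq T\subseteq W$; (ii) $d_{Y\setminus T}(v)\le\gamma' t$ for every $v\in S$; (iii) $d_S(v)\le \gamma' t$ for every $v\in Y\setminus T$. *)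

From Stdlib Require Import Reals ZArith.
From mathcomp Require Import all_boot.

Set Implicit Arguments.
Unset Strict Implicit.
Unset Printing Implicit Defensive.

Section Graph.
Variables (X Y : finType) (adj : X -> Y -> bool).

Definition regular (d : nat) : Prop :=
  (forall x : X, #|[set y | adj x y]| = d) /\
  (forall y : Y, #|[set x | adj x y]| = d).

Definition nbh (A : {set X}) : {set Y} :=
  [set y | [exists x in A, adj x y]].

Definition degX (S : {set X}) (y : Y) : nat := #|[set x in S | adj x y]|.
Definition degY (U : {set Y}) (x : X) : nat := #|[set y in U | adj x y]|.

(* adjacency in G^2 between two vertices of X: they share a neighbour
   (X is independent in G, so this is distance <= 2 for distinct vertices) *)
Definition sqadj : rel X := fun x x' => [exists y, adj x y && adj x' y].

Definition polymer (A : {set X}) : Prop :=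
  A != set0 /\
  forall x x', x \in A -> x' \in A ->
    connect (fun u v => [&& u \in A, v \in A & sqadj u v]) x x'.

Definition closure (A : {set X}) : {set X} :=
  [set x | nbh [set x] \subset nbh A].

Definition tval (A : {set X}) : Z :=
  (Z.of_nat #|nbh A| - Z.of_nat #|closure A|)%Z.

Definition inG (w : nat) (t : Z) (A : {set X}) : Prop :=
  polymer A /\ #|nbh A| = w /\ tval A = t.

Definition Wset (A : {set X}) (s : R) : {set Y} :=
  [set y in nbh A | (if Rle_dec s (INR (degX A y)) then true else false)].

Definition container (d : nat) (gamma' : R) (A : {set X})
    (S : {set X}) (T : {set Y}) : Prop :=
  [/\ closure A \subset S,
      Wset A (Rdiv (INR d) (INR 2)) \subset T,
      T \subset nbh A,
      (forall v, v \in S -> Rle (INR (degY (~: T) v)) (Rmult gamma' (IZR (tval A))))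
    & (forall v, v \in ~: T -> Rle (INR (degX S v)) (Rmult gamma' (IZR (tval A))))].

End Graph.

(* Let C = [A], N = N(A) and t = |N| - |C|, and let K = floor (gamma' t)
   (nat_floor), a natural number bounding all the exceptional degrees of
   the container (S,T).
   Double counting the d t edges that enter N from X \ C shows that every
   vertex of S \ C and every vertex of N \ T accounts for at least d - K of
   them (container_edge_count).  If |S| > |T|, then
   |S \ C| + |N \ T| >= t + 1, whence d <= K (t + 1) <= gamma' t (t + 1)
   (container_degree_bound).  Since t <= ln^4 n, this polylogarithmic
   quantity is eventually smaller than delta n - 1 < d
   (polylog_eventually_le_linear), a contradiction. *)

From Pilot Require Import Defs.
From Stdlib Require Import Reals ZArith Lra Psatz.

Section RealEstimates.
Local Open Scope R_scope.

Lemma Rpower_gt0 (x y : R) : 0 < Rpower x y.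
Proof. unfold Rpower; apply exp_pos. Qed.

Lemma ln_ge0 (x : R) : 1 <= x -> 0 <= ln x.
Proof.
intros Hx; destruct (Req_dec x 1) as [->|H]; [rewrite ln_1; lra|].
rewrite <- ln_1; left; apply ln_increasing; lra.
Qed.

(* A logarithm is dominated by any root: ln x <= k * x^(1/k), since ln r <= r - 1. *)
Lemma ln_le_root (x k : R) : 0 < x -> 0 < k -> ln x <= k * Rpower x (/ k).
Proof.
intros Hx Hk.
set (r := Rpower x (/ k)).
assert (Hlnr : ln r = / k * ln x) by apply ln_Rpower.
assert (Hr : 1 + ln r <= r).
{ pose proof (exp_ineq1_le (ln r)) as H.
  rewrite exp_ln in H by apply Rpower_gt0; exact H. }
replace (ln x) with (k * ln r) by (rewrite Hlnr; field; lra).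
apply Rmult_le_compat_l; lra.
Qed.

Lemma ln_pow4_le_root4 (x : R) :
  1 <= x -> ln x ^ 4 <= 16 ^ 4 * Rpower x (/ 4).
Proof.
intros Hx.
assert (HL : 0 <= ln x) by (apply ln_ge0; exact Hx).
assert (Hroot : Rpower x (/ 16) ^ 4 = Rpower x (/ 4)).
{ rewrite <- Rpower_pow by apply Rpower_gt0.
  rewrite Rpower_mult; f_equal; simpl; field. }
rewrite <- Hroot, <- Rpow_mult_distr.
apply pow_incr; split; [exact HL|].
apply ln_le_root; lra.
Qed.

Lemma polylog_eventually_le_linear (delta g : R) : 0 < delta -> 0 <= g ->
  exists x0, forall x, x0 <= x ->
    g * ln x ^ 4 * (ln x ^ 4 + 1) + 1 <= delta * x.
Proof.
intros Hd Hg.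
set (c := 16 ^ 4).
set (K := g * (c * c + c) + 1).
exists ((K / delta) ^ 2 + 1); intros x Hx.
assert (HK : 0 < K) by (unfold K, c; nra).
assert (Hx1 : 1 <= x) by nra.
set (s := Rpower x (/ 4)).
assert (Hs4 : s ^ 4 = x).
{ unfold s; rewrite <- Rpower_pow by apply Rpower_gt0.
  rewrite Rpower_mult; replace (/ 4 * INR 4) with 1 by (simpl; field).
  apply Rpower_1; lra. }
assert (Hs1 : 1 <= s).
{ destruct (Rle_or_lt 1 s) as [H|H]; [exact H|].
  assert (0 < s) by apply Rpower_gt0.
  assert (s * s < 1) by nra.
  assert (s ^ 4 < 1) by (replace (s ^ 4) with ((s * s) * (s * s)) by ring; nra).
  lra. }
assert (HM : ln x ^ 4 <= c * s) by apply ln_pow4_le_root4, Hx1.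
assert (HM0 : 0 <= ln x ^ 4)
  by (apply pow_le, ln_ge0, Hx1).
assert (Hpoly : g * ln x ^ 4 * (ln x ^ 4 + 1) + 1 <= K * (s * s)).
{ assert (ln x ^ 4 * (ln x ^ 4 + 1) <= (c * c + c) * (s * s))
    by (unfold c in *; nra).
  unfold K; nra. }
assert (Hss : K / delta <= s * s).
{ destruct (Rle_or_lt (K / delta) (s * s)) as [H|H]; [exact H|].
  assert (0 < K / delta) by (apply Rdiv_lt_0_compat; lra).
  assert ((s * s) * (s * s) < (K / delta) ^ 2) by nra.
  replace ((s * s) * (s * s)) with (s ^ 4) in * by ring. lra. }
assert (HKs : K <= delta * (s * s)).
{ apply (Rmult_le_compat_l delta) in Hss; [|lra].
  replace (delta * (K / delta)) with K in Hss by (field; lra). exact Hss. }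
replace (delta * x) with (delta * (s * s) * (s * s)) by (rewrite <- Hs4; ring).
nra.
Qed.

Lemma nat_floor (b : R) : 0 <= b ->
  exists K : nat, INR K <= b /\ forall m : nat, INR m <= b -> (m <= K)%nat.
Proof.
intros Hb; destruct (archimed b) as [Hup Hup1].
assert (Hpos : (1 <= up b)%Z) by (apply (Zlt_le_succ 0), lt_IZR; lra).
exists (Z.to_nat (up b - 1)); split.
- rewrite INR_IZR_INZ, Z2Nat.id by lia; rewrite minus_IZR; simpl; lra.
- intros m Hm.
  assert (Hlt : (Z.of_nat m < up b)%Z) by (apply lt_IZR; rewrite <- INR_IZR_INZ; lra).
  lia.
Qed.
End RealEstimates.

From mathcomp Require Import all_boot zify.

Set Implicit Arguments.
Unset Strict Implicit.
Unset Printing Implicit Defensive.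

Lemma card_set_in_pred (T : finType) (Q : {set T}) (p : pred T) :
  #|[set y in Q | p y]| = \sum_(y in Q) (p y : nat).
Proof.
rewrite -sum1_card (eq_bigl (fun y => (y \in Q) && p y)); last by move=> y; rewrite !inE.
by rewrite big_mkcondr /=; apply: eq_bigr => y _; case: (p y).
Qed.

Section Degrees.
Variables (X Y : finType) (adj : X -> Y -> bool).

Lemma degY_sum (U : {set Y}) (x : X) :
  degY adj U x = \sum_(y in U) (adj x y : nat).
Proof. exact: card_set_in_pred. Qed.

Lemma degX_sum (P : {set X}) (y : Y) :
  degX adj P y = \sum_(x in P) (adj x y : nat).
Proof. exact: card_set_in_pred. Qed.

Lemma sum_degY_degX (P : {set X}) (Q : {set Y}) :
  \sum_(x in P) degY adj Q x = \sum_(y in Q) degX adj P y.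
Proof.
under eq_bigr do rewrite degY_sum.
by rewrite exchange_big /=; apply: eq_bigr => y _; rewrite degX_sum.
Qed.

Lemma degY_setID (U V : {set Y}) (x : X) :
  degY adj V x = degY adj (V :&: U) x + degY adj (V :\: U) x.
Proof. by rewrite !degY_sum (big_setID U). Qed.

Lemma degX_setID (U V : {set X}) (y : Y) :
  degX adj V y = degX adj (V :&: U) y + degX adj (V :\: U) y.
Proof. by rewrite !degX_sum (big_setID U). Qed.

Lemma degX_subset (P P' : {set X}) (y : Y) :
  P \subset P' -> degX adj P y <= degX adj P' y.
Proof.
move=> sPP'; apply: subset_leq_card; apply/subsetP => x; rewrite !inE.
by case/andP=> xP ->; rewrite (subsetP sPP' x xP).
Qed.

Lemma degY_closure_out (A : {set X}) (x : X) :
  x \in Defs.closure adj A -> degY adj (~: nbh adj A) x = 0.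
Proof.
rewrite inE => /subsetP sNxNA; apply/eqP; rewrite cards_eq0; apply/eqP/setP => y.
rewrite inE in_set0 in_setC; apply/negbTE/negP => /andP[/negP yNA axy]; apply: yNA.
by apply: sNxNA; rewrite inE; apply/existsP; exists x; rewrite inE eqxx axy.
Qed.

Variables (d : nat).
Hypothesis reg : regular adj d.

Lemma degY_setT (x : X) : degY adj [set: Y] x = d.
Proof. by case: reg => regX _; rewrite -(regX x); apply: eq_card => y; rewrite !inE. Qed.

Lemma degX_setT (y : Y) : degX adj [set: X] y = d.
Proof. by case: reg => _ regY; rewrite -(regY y); apply: eq_card => x; rewrite !inE. Qed.

Lemma degY_setC (U : {set Y}) (x : X) : degY adj U x + degY adj (~: U) x = d.
Proof. by rewrite -(degY_setT x) (degY_setID U [set: Y]) setTI setTD. Qed.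

Lemma degX_setC (U : {set X}) (y : Y) : degX adj U y + degX adj (~: U) y = d.
Proof. by rewrite -(degX_setT y) (degX_setID U [set: X]) setTI setTD. Qed.

(* Counting the d|N(A)| edges at N(A): those from [A] account for d|[A]|,
   so the vertices outside [A] send exactly d(|N(A)| - |[A]|) edges into N(A). *)
Lemma sum_degY_outside_closure (A : {set X}) :
  \sum_(x in ~: Defs.closure adj A) degY adj (nbh adj A) x
    + d * #|Defs.closure adj A| = d * #|nbh adj A|.
Proof.
set C := Defs.closure adj A; set N := nbh adj A.
have total : \sum_(x in [set: X]) degY adj N x = #|N| * d.
  by rewrite sum_degY_degX -sum_nat_const; apply: eq_bigr => y _; exact: degX_setT.
have inner : \sum_(x in C) degY adj N x = #|C| * d.
  rewrite -sum_nat_const; apply: eq_bigr => x xC.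
  by rewrite -(degY_setC N x) degY_closure_out // addn0.
rewrite [d * #|N|]mulnC -total (big_setID (A := [set: X]) C) setTI setTD inner.
by rewrite addnC mulnC.
Qed.

(* The core double counting for a container (S,T) with all "exceptional"
   degrees at most K: every vertex of S \ [A] sends at least d - K edges
   into T, and every vertex of N(A) \ T receives at least d - K edges from
   outside [A]; both kinds of edges are among the d(|N(A)| - |[A]|) edges
   entering N(A) from outside [A]. *)
Lemma container_edge_count (K : nat) (A S : {set X}) (T : {set Y}) :
  Defs.closure adj A \subset S -> T \subset nbh adj A ->
  (forall v, v \in S -> degY adj (~: T) v <= K) ->
  (forall v, v \in ~: T -> degX adj S v <= K) ->
  (#|S :\: Defs.closure adj A| + #|nbh adj A :\: T|) * (d - K)
    <= d * #|nbh adj A| - d * #|Defs.closure adj A|.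
Proof.
move=> sCS sTN degS degT.
set C := Defs.closure adj A; set N := nbh adj A.
have split_edges : \sum_(x in ~: C) degY adj N x =
   \sum_(x in ~: C) degY adj T x + \sum_(y in N :\: T) degX adj (~: C) y.
  rewrite -sum_degY_degX -big_split /=; apply: eq_bigr => x _.
  by rewrite (degY_setID T) (setIidPr sTN).
have edges_from_S : #|S :\: C| * (d - K) <= \sum_(x in ~: C) degY adj T x.
  rewrite (big_setID S) /= -sum_nat_const setIC -setDE.
  apply: leq_trans (leq_addr _ _); apply: leq_sum => x; rewrite inE => /andP[_ xS].
  by have := degY_setC T x; have := degS x xS; lia.
have edges_to_NT : #|N :\: T| * (d - K) <= \sum_(y in N :\: T) degX adj (~: C) y.
  rewrite -sum_nat_const; apply: leq_sum => y; rewrite inE => /andP[yT _].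
  have := degX_setC C y; have := degX_subset y sCS.
  by have := degT y; rewrite inE yT -/C => /(_ isT); lia.
have := sum_degY_outside_closure A; rewrite mulnDl -/C -/N; lia.
Qed.

Lemma container_degree_bound (K : nat) (A S : {set X}) (T : {set Y}) :
  Defs.closure adj A \subset S -> T \subset nbh adj A ->
  (forall v, v \in S -> degY adj (~: T) v <= K) ->
  (forall v, v \in ~: T -> degX adj S v <= K) ->
  #|Defs.closure adj A| <= #|nbh adj A| -> #|T| < #|S| ->
  d <= K * (#|nbh adj A| - #|Defs.closure adj A|).+1.
Proof.
move=> sCS sTN degS degT leCN ltTS.
have := container_edge_count sCS sTN degS degT.
have := cardsID (Defs.closure adj A) S; rewrite (setIidPr sCS).
have := cardsID T (nbh adj A); rewrite (setIidPr sTN).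
nia.
Qed.

End Degrees.

Theorem mainTheorem12 (delta gamma' : R) :
  Rlt R0 delta -> Rlt delta R1 -> Rlt R0 gamma' ->
  exists N : nat, forall n : nat, (N <= n)%N ->
  forall (X Y : finType) (adj : X -> Y -> bool) (d : nat),
    #|X| + #|Y| = 2 * n ->
    regular adj d ->
    Rle (INR d) (Rmult delta (INR n)) ->
    Rlt (Rmult delta (INR n)) (Rplus (INR d) R1) ->
  forall (w : nat) (t : Z) (A : {set X}) (S : {set X}) (T : {set Y}),
    Rle (IZR t) (pow (ln (INR n)) 4) ->
    inG adj w t A ->
    container adj d gamma' A S T ->
    #|S| <= #|T|.
Proof.
move=> delta_gt0 _ gamma_gt0.
have gamma_ge0 := Rlt_le _ _ gamma_gt0.
have [x0 large] := polylog_eventually_le_linear _ _ delta_gt0 gamma_ge0.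
have [N x0_lt_N] := INR_unbounded x0.
exists N => n le_Nn X Y adj d _ reg _ d_large w t A S T t_le [_ [_ tA]].
move=> [sCS _ sTN degS degT].
have n_large := large (INR n)
  (Rle_trans _ _ _ (Rlt_le _ _ x0_lt_N) (le_INR _ _ (elimT leP le_Nn))).
rewrite tA in degS degT.
case: (set_0Vmem S) => [-> | [v vS]]; first by rewrite cards0.
have t_ge0 : Rle 0 (IZR t).
  by have := degS v vS; have := pos_INR (degY adj (~: T) v); nra.
have [K [K_le K_max]] := nat_floor _ (Rmult_le_pos _ _ gamma_ge0 t_ge0).
have t_def : IZR t = Rminus (INR #|nbh adj A|) (INR #|Defs.closure adj A|).
  by rewrite -tA /tval minus_IZR -!INR_IZR_INZ.
have leCN : #|Defs.closure adj A| <= #|nbh adj A| by apply/leP/INR_le; lra.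
rewrite leqNgt; apply/negP => ltTS.
have d_le_nat := container_degree_bound reg sCS sTN
  (fun u uS => introT leP (K_max _ (degS u uS)))
  (fun y yT => introT leP (K_max _ (degT y yT))) leCN ltTS.
have d_le : Rle (INR d) (INR K * (IZR t + 1)).
  rewrite t_def -minus_INR; last exact/leP.
  rewrite -(INR_IZR_INZ 1) -plus_INR -mult_INR minusE plusE multE addn1.
  by apply/le_INR/leP; exact: d_le_nat.
have Kt_le : Rle (INR K * (IZR t + 1)) (gamma' * IZR t * (IZR t + 1)) by nra.
set M := pow (ln (INR n)) 4 in t_le n_large.
have tt_le : Rle (IZR t * (IZR t + 1)) (M * (M + 1)) by apply: Rmult_le_compat; lra.
nra.
Qed.
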